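(* Identify cells of the square lattice with points $(x,y)\in\mathbb{Z}^2$. A (fixed) polyomino is a finite edge-connected set of cells, counted up to translation. For $n\ge 1$, let $f(n)$ be the number of pairs $(P,c)$ where $P$ is a polyomino with $n$ cells and $c=(x,y)$ is a cell of $P$ such that none of the cells $(x-1,y-1)$, $(x,y-1)$, $(x+1,y-1)$ belongs to $P$ (Type A). Let $g(n)$ be the number of such pairs for which, in addition, the cell $(x-1,y)$ does not belong to $P$ (Type B). Set $f(0)=g(0)=1$. Define $F(n)$ and $G(n)$ by $F(0)=F(1)=G(0)=G(1)=1$ and, for $n\ge 2$, \[ F(n)=G(n)+\sum_{\ell,m\ge 1,\ \ell+m=n} G(\ell)G(m),\qquad G(n)=F(n-1)+G(n-1)+\sum_{\ell,m\ge 1,\ \ell+m=n-1} G(\ell)G(m). \] Then $f(n)\le F(n)$ and $g(n)\le G(n)$ for all $n\ge 0$.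
   Context: Pairs $(P,c)$ are counted with $P$ up to translation (equivalently, a pair is determined by the translation class of $(P,c)$). Cells are edge-adjacent if they share an edge; a polyomino is an edge-connected finite set of cells. *)

From HB Require Import structures.
From mathcomp Require Import all_boot all_order all_algebra.
From mathcomp Require Import finmap.
From mathcomp Require Import classical_sets cardinality.
Set Implicit Arguments. Unset Strict Implicit. Unset Printing Implicit Defensive.
Import Order.TTheory GRing.Theory Num.Theory.
Local Open Scope fset_scope.

Definition cell := (int * int)%type.

Definition adj : rel cell :=
  fun a b => (`|(a.1 - b.1)%R|%N + `|(a.2 - b.2)%R|%N == 1)%N.

Definition edge_connected (P : {fset cell}) : Prop :=
  forall x y, x \in P -> y \in P ->
    exists p : seq cell, [/\ path adj x p, last x p = y & all (fun z => z \in P) p].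

Definition polyomino_n (n : nat) (P : {fset cell}) : Prop :=
  edge_connected P /\ #|` P| = n.

Definition shift (c : cell) (dx dy : int) : cell := (c.1 + dx, c.2 + dy)%R.

Definition typeA (P : {fset cell}) (c : cell) : bool :=
  [&& c \in P, shift c (-1) (-1) \notin P, shift c 0 (-1) \notin P
    & shift c 1 (-1) \notin P].

Definition typeB (P : {fset cell}) (c : cell) : bool :=
  typeA P c && (shift c (-1) 0 \notin P).

Definition origin : cell := (0%R, 0%R).

(* Pairs (P, c) up to translation: every translation class contains exactly one
   pair with c at the origin, so classes are in bijection with the sets below. *)
Definition pairsA (n : nat) : set {fset cell} :=
  [set P | polyomino_n n P /\ typeA P origin].
Definition pairsB (n : nat) : set {fset cell} :=
  [set P | polyomino_n n P /\ typeB P origin].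

Definition f (n : nat) : nat := if n == 0%N then 1%N else #|` fset_set (pairsA n)|.
Definition g (n : nat) : nat := if n == 0%N then 1%N else #|` fset_set (pairsB n)|.

From HB Require Import structures.
From mathcomp Require Import all_boot all_order all_algebra.
From mathcomp Require Import finmap.
From mathcomp Require Import boolp classical_sets cardinality.
From mathcomp Require Import zify.
Set Implicit Arguments. Unset Strict Implicit. Unset Printing Implicit Defensive.
Import Order.TTheory GRing.Theory Num.Theory.
Local Open Scope fset_scope.
Local Open Scope nat_scope.

(* Put the marked cell c at the origin.  In a pair of type B the
   cells W, SW, S, SE are absent, so once c is removed every remaining cell is
   linked to N or to E.  If only N is present, the rest is of type A at N; if
   only E, the rest reflected in the diagonal through E is of type B; if both
   are present, the cells linked to E avoiding N and the remaining ones (which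
   contain N) are two polyominoes, of type B after reflecting the first in the
   diagonal through E and the second in the vertical line through N.  A pair of
   type A without W is of type B; with W, it splits at W into the component of
   c in P minus W, of type B, and the rest, of type B after a quarter turn
   about W.  The sizes of the pieces add up and the pieces determine P, so f and
   g satisfy the recurrences of F and G with <= in place of =. *)

Section Connectivity.
Variables (T : choiceType) (e : rel T).

Inductive conn (S : {fset T}) : T -> T -> Prop :=
| conn_refl x : conn S x x
| conn_step x y z : e x y -> y \in S -> conn S y z -> conn S x z.

Definition connected (S : {fset T}) :=
  forall x y, x \in S -> y \in S -> conn S x y.

Lemma conn_trans S x y z : conn S x y -> conn S y z -> conn S x z.
Proof. by elim=> // u v w Euv Sv _ IH /IH; apply: conn_step. Qed.

Lemma conn_pathP S x y :
  (exists p, [/\ path e x p, last x p = y & all (fun z => z \in S) p]) <->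
  conn S x y.
Proof.
split=> [[p]|].
  elim: p x => [|z p IH] x /= [exz_p zpy Sz_p]; first by rewrite -zpy; apply: conn_refl.
  case/andP: exz_p => exz ezp; case/andP: Sz_p => Sz Sp.
  exact: conn_step exz Sz (IH z (And3 ezp zpy Sp)).
elim=> [u|u v w Euv Sv _ [p [evp <- Sp]]]; first by exists [::].
by exists (v :: p); rewrite /= Euv Sv evp Sp.
Qed.

Lemma conn_map (h : T -> T) S S' x y :
  {homo h : u v / e u v} -> {in S, forall z, h z \in S'} ->
  conn S x y -> conn S' (h x) (h y).
Proof.
move=> eh hS; elim=> [u|u v w Euv Sv _ IH]; first exact: conn_refl.
exact: conn_step (eh _ _ Euv) (hS _ Sv) IH.
Qed.

Lemma conn_last_step S x c : x \in S -> x != c -> conn S x c ->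
  exists y, [/\ e y c, y \in S & conn (S `\ c) x y].
Proof.
move=> + + H; elim: H => [u|u v w Euv Sv Hvw IH] Su; first by rewrite eqxx.
move=> _; have [vw | vw] := eqVneq v w.
  by exists u; rewrite -vw; split => //; apply: conn_refl.
have [y [eyw Sy Hvy]] := IH Sv vw; exists y; split => //.
by apply: conn_step Euv _ Hvy; rewrite in_fsetD1 vw Sv.
Qed.

Hypothesis e_sym : symmetric e.

Lemma conn_sym S x y : x \in S -> conn S x y -> conn S y x.
Proof.
move=> + H; elim: H => [u|u v w Euv Sv _ IH] Su; first exact: conn_refl.
apply: conn_trans (IH Sv) _; apply: conn_step (conn_refl _ _) => //.
by rewrite e_sym.
Qed.

Lemma connected_to S c : (forall z, z \in S -> conn S z c) -> connected S.
Proof. by move=> Hc x y Sx Sy; apply: conn_trans (Hc x Sx) (conn_sym Sy (Hc y Sy)). Qed.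

Section Sides.
Variables (S : {fset T}) (a b : T).

Definition side_b := [fset z in S `\ a | `[< conn (S `\ a) b z >]].
Definition side_a := S `\` side_b.

Lemma in_side_b z : (z \in side_b) = (z \in S `\ a) && `[< conn (S `\ a) b z >].
Proof. by rewrite !inE. Qed.

Lemma side_b_sub z : z \in side_b -> z \in S.
Proof. by rewrite in_side_b in_fsetD1 => /andP[/andP[]]. Qed.

Lemma side_b_neq z : z \in side_b -> z != a.
Proof. by rewrite in_side_b in_fsetD1 => /andP[/andP[]]. Qed.

Lemma in_side_a z : (z \in side_a) = (z \notin side_b) && (z \in S).
Proof. by rewrite inE. Qed.

Lemma side_a_sub z : z \in side_a -> z \in S.
Proof. by rewrite in_side_a => /andP[]. Qed.

Lemma side_b_closed x y : x \in side_b -> y \in S `\ a -> e x y -> y \in side_b.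
Proof.
rewrite !in_side_b => /andP[_ /asboolP bx] Sy exy; rewrite Sy; apply/asboolP.
exact: conn_trans bx (conn_step exy Sy (conn_refl _ _)).
Qed.

Lemma fsetU_sides : side_a `|` side_b = S.
Proof.
apply/fsetP => z; rewrite in_fsetU in_side_a.
by case: (boolP (z \in side_b)) => [/side_b_sub ->|]; rewrite ?orbT ?orbF.
Qed.

Lemma card_sides : #|` side_a| + #|` side_b| = #|` S|.
Proof.
have sub : side_b `<=` S by apply/fsubsetP => z /side_b_sub.
by rewrite cardfsDS // subnK // fsubset_leq_card.
Qed.

Hypotheses (aS : a \in S) (bS : b \in S) (ab : a != b).

Lemma b_in_side_b : b \in side_b.
Proof. by rewrite in_side_b in_fsetD1 eq_sym ab bS; apply/asboolP/conn_refl. Qed.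

Lemma a_in_side_a : a \in side_a.
Proof. by rewrite in_side_a aS andbT; apply/negP => /side_b_neq; rewrite eqxx. Qed.

Lemma conn_side_b x y : x \in side_b -> conn (S `\ a) x y -> conn side_b x y.
Proof.
move=> + H; elim: H => [u|u v w Euv Sv _ IH] ub; first exact: conn_refl.
have vb := side_b_closed ub Sv Euv.
exact: conn_step Euv vb (IH vb).
Qed.

Lemma connected_side_b : connected side_b.
Proof.
move=> x y xb yb; apply: conn_side_b => //.
move: xb yb; rewrite !in_side_b => /andP[_ /asboolP bx] /andP[_ /asboolP by_].
have bSa : b \in S `\ a by rewrite in_fsetD1 eq_sym ab bS.
exact: conn_trans (conn_sym bSa bx) by_.
Qed.

(* [side_b] is closed under steps avoiding [a], so a walk starting outside it
   reaches [a] before it could reach [b]. *)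
Lemma conn_side_a z t : z \in S -> z \notin side_b -> t \in [:: a; b] ->
  conn S z t -> conn side_a z a.
Proof.
move=> + + + H; elim: H => [u|u v w Euv Sv _ IH] Su ub.
  rewrite !inE => /orP[] /eqP ?; subst u; first exact: conn_refl.
  by rewrite b_in_side_b in ub.
move=> wab; have [-> | ua] := eqVneq u a; first exact: conn_refl.
have vb : v \notin side_b.
  apply: contra ub => vb; apply: side_b_closed vb _ _; last by rewrite e_sym.
  by rewrite in_fsetD1 ua Su.
by apply: conn_step Euv _ (IH Sv vb wab); rewrite in_side_a vb Sv.
Qed.

Hypothesis reach : forall z, z \in S -> conn S z a \/ conn S z b.

Lemma connected_side_a : connected side_a.
Proof.
apply: connected_to => z; rewrite in_side_a => /andP[zb Sz].
by case: (reach Sz) => /conn_side_a; apply=> //; rewrite !inE eqxx ?orbT.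
Qed.

End Sides.
End Connectivity.

Lemma eq_of_sides (T : choiceType) (e : rel T) (S S' : {fset T}) a b :
  side_a e S a b = side_a e S' a b -> side_b e S a b = side_b e S' a b -> S = S'.
Proof. by move=> Ea Eb; rewrite -(fsetU_sides e S a b) Ea Eb fsetU_sides. Qed.

Lemma card_le_inj (T U : choiceType) (X : {fset T}) (Y : {fset U}) (h : T -> U) :
  {in X &, injective h} -> {in X, forall x, h x \in Y} -> #|` X| <= #|` Y|.
Proof.
move=> hinj hY; have <- : #|` h @` X| = #|` X| by apply: card_in_imfset.
apply: fsubset_leq_card.
by apply/fsubsetP => _ /imfsetP[x /= Xx ->]; apply: hY.
Qed.

Lemma card_bigfcup_le (I : eqType) (U : choiceType) (r : seq I) (Y : I -> {fset U}) :
  #|` \bigcup_(i <- r) Y i| <= \sum_(i <- r) #|` Y i|.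
Proof.
elim: r => [|i r IH]; first by rewrite !big_nil cardfs0.
by rewrite !big_cons (leq_trans (leq_card_fsetU _ _).1) // leq_add2l.
Qed.

Lemma cardfsM (T U : choiceType) (A : {fset T}) (B : {fset U}) :
  #|` A `*` B| = #|` A| * #|` B|.
Proof.
rewrite /fsetM (perm_size (enum_imfset2 _ _)) ?size_allpairs //.
by move=> [? ?] [? ?] _ _ /= [-> ->].
Qed.

Lemma card_fset_sep (T : choiceType) (A : {fset T}) (p : pred T) :
  #|` A| = #|` [fset x in A | p x]| + #|` [fset x in A | ~~ p x]|.
Proof.
rewrite -(cardfsID [fset x in A | p x] A).
have -> : A `&` [fset x in A | p x] = [fset x in A | p x].
  by apply/fsetP => x; rewrite !inE; case: (x \in A).
have -> // : A `\` [fset x in A | p x] = [fset x in A | ~~ p x].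
by apply/fsetP => x; rewrite !inE; case: (x \in A); case: (p x).
Qed.

Lemma eq_fsetD1 (T : choiceType) (c : T) (A A' : {fset T}) :
  c \in A -> c \in A' -> A `\ c = A' `\ c -> A = A'.
Proof. by move=> cA cA' E; rewrite -(fsetD1K cA) -(fsetD1K cA') E. Qed.

Lemma leq_convolution (a b : nat -> nat) m :
  (forall l, 0 < l < m -> a l <= b l) ->
  \sum_(1 <= l < m) a l * a (m - l) <= \sum_(1 <= l < m) b l * b (m - l).
Proof.
move=> ab; rewrite big_nat_cond [leqRHS]big_nat_cond.
apply: leq_sum => l /andP[/andP[l0 lm] _]; apply: leq_mul; apply: ab.
  by rewrite l0.
by rewrite subn_gt0 lm ltn_subrL l0 (leq_trans l0 (ltnW lm)).
Qed.

Lemma adjC : symmetric adj.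
Proof. by move=> a b; rewrite /adj; apply/eqP/eqP; lia. Qed.

Lemma edge_connectedE P : edge_connected P <-> connected adj P.
Proof. by split=> H x y Px Py; apply/conn_pathP; apply: H. Qed.

Definition norm1 (z : cell) : nat := `|z.1| + `|z.2|.

Lemma norm1_adj x y : adj x y -> norm1 y <= (norm1 x).+1.
Proof. by rewrite /adj /norm1 => /eqP; lia. Qed.

Lemma conn_norm1 S x y : conn adj S x y -> x \in S ->
  forall k, norm1 x <= k <= norm1 y -> exists2 w, w \in S & norm1 w = k.
Proof.
elim=> [u|u v w Euv Sv _ IH] Su k /andP[uk kw].
  by exists u => //; apply/eqP; rewrite eqn_leq uk kw.
have [-> | ku] := eqVneq k (norm1 u); first by exists u.
by apply: IH => //; have := norm1_adj Euv; lia.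
Qed.

(* Along a path from the origin to [z] the norm grows by at most one per
   step, so [P] has cells of each norm [0, ..., norm1 z]. *)
Lemma norm1_lt_card P z : connected adj P -> origin \in P -> z \in P ->
  norm1 z < #|` P|.
Proof.
move=> Pc oP zP; rewrite -(size_iota 0 (norm1 z).+1) -[#|` P|](size_map norm1).
apply: uniq_leq_size (iota_uniq _ _) _ => k; rewrite mem_iota add0n ltnS => kz.
have [w Pw <-] := conn_norm1 (Pc _ _ oP zP) oP (k := k) kz.
exact: map_f.
Qed.

Definition int_range (n : nat) : seq int :=
  [seq (k%:Z - n%:Z)%R | k <- iota 0 (n + n).+1].

Lemma mem_int_range n (i : int) : `|i| <= n -> i \in int_range n.
Proof.
by move=> iN; apply/mapP; exists `|(i + n%:Z)%R|; [rewrite mem_iota | ]; lia.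
Qed.

Definition box (n : nat) : {fset cell} :=
  [fset ((i, j) : cell) | i in int_range n, j in int_range n].

Lemma mem_box n z : norm1 z <= n -> z \in box n.
Proof.
by case: z => i j; rewrite /norm1 /= => ijN; apply: in_imfset2; apply: mem_int_range; lia.
Qed.

Lemma finite_polyominoes n (A : set {fset cell}) :
  (forall P, A P -> polyomino_n n P /\ origin \in P) -> finite_set A.
Proof.
move=> HA; apply: (@finite_subfset _ (fpowerset (box n))) => P /HA[[Pc <-] oP].
rewrite /= fpowersetE; apply/fsubsetP => z zP; apply/mem_box/ltnW.
by apply: norm1_lt_card => //; apply/edge_connectedE.
Qed.

Lemma finite_pairsA n : finite_set (pairsA n).
Proof. by apply: (@finite_polyominoes n) => P [? /and4P[]]. Qed.

Lemma finite_pairsB n : finite_set (pairsB n).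
Proof. by apply: (@finite_polyominoes n) => P [? /andP[/and4P[]]]. Qed.

Record grid_symmetry (h hi : cell -> cell) : Prop := GridSymmetry {
  symK : cancel h hi;
  symKV : cancel hi h;
  sym_adj : {homo h : u v / adj u v}
}.

Definition transp (z : cell) : cell := (z.2, z.1).
Definition mirr (z : cell) : cell := ((- z.1)%R, z.2).
Definition rotcw (z : cell) : cell := (z.2, (- z.1)%R).
Definition rotccw (z : cell) : cell := ((- z.2)%R, z.1).

Definition recentre (L : cell -> cell) (a z : cell) : cell :=
  L ((z.1 - a.1)%R, (z.2 - a.2)%R).
Definition uncentre (Li : cell -> cell) (a z : cell) : cell :=
  (((Li z).1 + a.1)%R, ((Li z).2 + a.2)%R).

Lemma sym_id : grid_symmetry id id.
Proof. by split. Qed.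

Lemma sym_transp : grid_symmetry transp transp.
Proof.
split=> [[]|[]|[u1 u2] [v1 v2]] //; rewrite /adj /=.
by move=> /eqP ?; apply/eqP; lia.
Qed.

Lemma sym_mirr : grid_symmetry mirr mirr.
Proof.
split=> [[] ? ?|[] ? ?|[u1 u2] [v1 v2]]; rewrite /mirr /adj /= ?opprK //.
by move=> /eqP ?; apply/eqP; lia.
Qed.

Lemma sym_rotcw : grid_symmetry rotcw rotccw.
Proof.
split=> [[] ? ?|[] ? ?|[u1 u2] [v1 v2]]; rewrite /rotcw /rotccw /adj /= ?opprK //.
by move=> /eqP ?; apply/eqP; lia.
Qed.

Lemma sym_recentre L Li a : grid_symmetry L Li ->
  grid_symmetry (recentre L a) (uncentre Li a).
Proof.
case=> LK LKV Ladj; split.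
- by case=> z1 z2; rewrite /recentre /uncentre LK /=; congr pair; lia.
- move=> z; rewrite /recentre /uncentre /=.
  by rewrite -[RHS]LKV; case: (Li z) => ? ? /=; congr (L (_, _)); lia.
- move=> [u1 u2] [v1 v2] uv; apply: Ladj; move: uv; rewrite /adj /= => /eqP ?.
  by apply/eqP; lia.
Qed.

Section SymmetricImage.
Variables (h hi : cell -> cell).
Hypothesis hs : grid_symmetry h hi.

Lemma mem_sym_image (A : {fset cell}) x : (x \in h @` A) = (hi x \in A).
Proof. by rewrite -{1}(symKV hs x) (mem_imfset _ _ (can_inj (symK hs))). Qed.

Lemma sym_image_inj : injective (fun A : {fset cell} => h @` A).
Proof.
by move=> A B /= AB; apply/fsetP => z; rewrite -(symK hs z) -!mem_sym_image AB.
Qed.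

Lemma polyomino_sym_image A n : connected adj A -> #|` A| = n ->
  polyomino_n n (h @` A).
Proof.
move=> Ac An; split; last by rewrite card_imfset //; apply: can_inj (symK hs).
apply/edge_connectedE => x y; rewrite !mem_sym_image => Ax Ay.
rewrite -(symKV hs x) -(symKV hs y).
apply: conn_map (sym_adj hs) _ (Ac _ _ Ax Ay) => z Az.
by rewrite mem_sym_image symK.
Qed.

End SymmetricImage.

Local Notation cN := (0%R, 1%R).
Local Notation cE := (1%R, 0%R).
Local Notation cW := ((- 1)%R, 0%R).
Local Notation cS := (0%R, (- 1)%R).
Local Notation cSW := ((- 1)%R, (- 1)%R).
Local Notation cSE := (1%R, (- 1)%R).
Local Notation cNE := (1%R, 1%R).

Ltac simpl_cells := rewrite /shift /= ?(opprK, oppr0, add0r, addr0, addNr, addrN).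

Lemma typeA_cells P : typeA P origin ->
  [/\ origin \in P, cSW \notin P, cS \notin P & cSE \notin P].
Proof. by rewrite /typeA; simpl_cells => /and4P. Qed.

Lemma typeB_cells P : typeB P origin ->
  [/\ origin \in P, cSW \notin P, cS \notin P, cSE \notin P & cW \notin P].
Proof. by rewrite /typeB /typeA; simpl_cells => /andP[/and4P[? ? ? ?] ?]. Qed.

Lemma adj_origin y : adj y origin -> y \in [:: cE; cW; cN; cS].
Proof.
case: y => [y1 y2]; rewrite /adj /= !subr0 !inE !xpair_eqE => /eqP y12.
have : ((y1 == 1) && (y2 == 0) || (y1 == -1) && (y2 == 0) ||
        (y1 == 0) && (y2 == 1) || (y1 == 0) && (y2 == -1))%R by lia.
by rewrite -!orbA.
Qed.

Section TypeA.
Variables (P : {fset cell}) (n : nat).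
Hypotheses (Pc : connected adj P) (Pn : #|` P| = n) (HA : typeA P origin).

Lemma typeA_typeB : cW \notin P -> pairsB n P.
Proof.
move=> WP; split; first by split=> //; apply/edge_connectedE.
by rewrite /typeB HA; simpl_cells.
Qed.

Let Q1 := side_a adj P cW origin.
Let Q2 := side_b adj P cW origin.

Lemma typeA_split : cW \in P -> let l := #|` Q1| in
  [/\ 0 < l < n, pairsB l (recentre rotcw cW @` Q1) & pairsB (n - l) Q2].
Proof.
move=> WP l; have [oP SWP SP SEP] := typeA_cells HA.
have Wo : cW != origin by [].
have WQ1 : cW \in Q1 by apply: a_in_side_a.
have oQ2 : origin \in Q2 by apply: b_in_side_b.
have notP_Q1 x : x \notin P -> x \notin Q1 by apply: contra => /side_a_sub.
have notP_Q2 x : x \notin P -> x \notin Q2 by apply: contra => /side_b_sub.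
have l_pos : 0 < l by rewrite cardfs_gt0; apply/fset0Pn; exists cW.
have Q2_pos : 0 < #|` Q2| by rewrite cardfs_gt0; apply/fset0Pn; exists origin.
have cardQ : l + #|` Q2| = n by rewrite -Pn; apply: card_sides.
split; first by rewrite l_pos -cardQ -[X in X < _]addn0 ltn_add2l.
- split.
    apply: (polyomino_sym_image (sym_recentre cW sym_rotcw)) => //.
    by apply: (connected_side_a adjC oP Wo) => z Pz; left; apply: Pc.
  rewrite /typeB /typeA !(mem_sym_image (sym_recentre _ sym_rotcw)).
  rewrite /uncentre /rotccw; simpl_cells.
  have oQ1 : origin \notin Q1 by rewrite /Q1 in_side_a oQ2.
  have NQ1 : cN \notin Q1.
    have [NP|] := boolP (cN \in P); last exact: notP_Q1.
    by rewrite /Q1 in_side_a (side_b_closed oQ2 _ (_ : adj origin cN)) // in_fsetD1 NP.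
  by rewrite WQ1 oQ1 NQ1 !notP_Q1.
- split; first split.
  + by apply/edge_connectedE; apply: (connected_side_b adjC oP Wo).
  + by rewrite -cardQ addKn.
  rewrite /typeB /typeA; simpl_cells.
  have WQ2 : cW \notin Q2 by apply/negP => /side_b_neq; rewrite eqxx.
  by rewrite oQ2 WQ2 !notP_Q2.
Qed.

End TypeA.

Section TypeB.
Variables (P : {fset cell}) (n : nat).
Hypotheses (Pc : connected adj P) (Pn : #|` P| = n) (n_gt1 : 1 < n)
  (HB : typeB P origin).

Let S := P `\ origin.

Lemma notin_rest x : x \notin P -> x \notin S.
Proof. by apply: contra => /fsetD1P[]. Qed.

Lemma origin_notin_rest : origin \notin S.
Proof. by rewrite fsetD11. Qed.

Lemma typeB_reach z : z \in S ->
  cN \in P /\ conn adj S z cN \/ cE \in P /\ conn adj S z cE.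
Proof.
rewrite in_fsetD1 => /andP[zo zP]; have [oP _ SP _ WP] := typeB_cells HB.
have [y [yo yP zy]] := conn_last_step zP zo (Pc zP oP).
move: (adj_origin yo) yP zy; rewrite !inE => /or4P[] /eqP -> yP zy.
- by right.
- by rewrite yP in WP.
- by left.
- by rewrite yP in SP.
Qed.

Lemma card_typeB_rest : #|` S| = n.-1.
Proof. by have [oP _ _ _ _] := typeB_cells HB; rewrite -Pn (cardfsD1 origin P) oP. Qed.

Lemma typeB_noE : cE \notin P -> pairsA n.-1 (recentre id cN @` S).
Proof.
move=> EP; have [_ _ _ _ WP] := typeB_cells HB.
have reachN z : z \in S -> cN \in P /\ conn adj S z cN.
  by move=> /typeB_reach[] // [EP']; rewrite EP' in EP.
have NS : cN \in S.
  have /fset0Pn[z /reachN[NP _]] : S != fset0.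
    by rewrite -cardfs_gt0 card_typeB_rest; lia.
  by rewrite in_fsetD1 NP.
split.
  apply: (polyomino_sym_image (sym_recentre cN sym_id)) card_typeB_rest.
  by apply: (connected_to adjC (c := cN)) => z /reachN[].
rewrite /typeA !(mem_sym_image (sym_recentre cN sym_id)) /uncentre; simpl_cells.
by rewrite NS origin_notin_rest !notin_rest.
Qed.

Lemma typeB_noN : cE \in P -> cN \notin P -> pairsB n.-1 (recentre transp cE @` S).
Proof.
move=> EP NP; have [_ _ SP SEP _] := typeB_cells HB.
have reachE z : z \in S -> conn adj S z cE.
  by move=> /typeB_reach[] [] // NP'; rewrite NP' in NP.
split.
  apply: (polyomino_sym_image (sym_recentre cE sym_transp)) card_typeB_rest.
  exact: (connected_to adjC) reachE.
rewrite /typeB /typeA !(mem_sym_image (sym_recentre cE sym_transp)) /uncentre.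
rewrite /transp; simpl_cells.
have ES : cE \in S by rewrite in_fsetD1 EP.
by rewrite ES origin_notin_rest !notin_rest.
Qed.

Let Q1 := side_a adj S cN cE.
Let Q2 := side_b adj S cN cE.

Lemma typeB_split : cE \in P -> cN \in P -> let l := #|` Q1| in
  [/\ 0 < l < n.-1, pairsB l (recentre mirr cN @` Q1)
    & pairsB (n.-1 - l) (recentre transp cE @` Q2)].
Proof.
move=> EP NP l; have [_ _ SP SEP WP] := typeB_cells HB.
have NS : cN \in S by rewrite in_fsetD1 NP.
have ES : cE \in S by rewrite in_fsetD1 EP.
have NE : cN != cE :> cell by [].
have NQ1 : cN \in Q1 by apply: a_in_side_a.
have EQ2 : cE \in Q2 by apply: b_in_side_b.
have notP_Q1 x : x \notin P -> x \notin Q1.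
  by move/notin_rest; apply: contra => /side_a_sub.
have notP_Q2 x : x \notin P -> x \notin Q2.
  by move/notin_rest; apply: contra => /side_b_sub.
have oQ1 : origin \notin Q1 by apply: contra origin_notin_rest => /side_a_sub.
have oQ2 : origin \notin Q2 by apply: contra origin_notin_rest => /side_b_sub.
have l_pos : 0 < l by rewrite cardfs_gt0; apply/fset0Pn; exists cN.
have Q2_pos : 0 < #|` Q2| by rewrite cardfs_gt0; apply/fset0Pn; exists cE.
have cardQ : l + #|` Q2| = n.-1 by rewrite -card_typeB_rest; apply: card_sides.
split; first by rewrite l_pos -cardQ -[X in X < _]addn0 ltn_add2l.
- split.
    apply: (polyomino_sym_image (sym_recentre cN sym_mirr)) => //.
    apply: (connected_side_a adjC ES NE) => z /typeB_reach[] [_ ?]; by [left|right].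
  rewrite /typeB /typeA !(mem_sym_image (sym_recentre cN sym_mirr)) /uncentre.
  rewrite /mirr; simpl_cells.
  have EQ1 : cE \notin Q1 by rewrite /Q1 in_side_a EQ2.
  have NEQ1 : cNE \notin Q1.
    have [NEP|] := boolP (cNE \in P); last exact: notP_Q1.
    by rewrite /Q1 in_side_a (side_b_closed EQ2 _ (_ : adj cE cNE)) // !in_fsetD1 NEP.
  by rewrite NQ1 EQ1 NEQ1 oQ1 !notP_Q1.
- split.
    apply: (polyomino_sym_image (sym_recentre cE sym_transp)).
      exact: (connected_side_b adjC ES NE).
    by rewrite -cardQ addKn.
  rewrite /typeB /typeA !(mem_sym_image (sym_recentre cE sym_transp)) /uncentre.
  rewrite /transp; simpl_cells.
  have NQ2 : cN \notin Q2 by apply/negP => /side_b_neq; rewrite eqxx.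
  by rewrite EQ2 NQ2 oQ2 !notP_Q2.
Qed.

End TypeB.

Local Notation As n := (fset_set (pairsA n)).
Local Notation Bs n := (fset_set (pairsB n)).

Lemma AsP n P : reflect (pairsA n P) (P \in As n).
Proof.
by rewrite in_fset_set; [apply: (iffP idP) => /[1!inE] | apply: finite_pairsA].
Qed.

Lemma BsP n P : reflect (pairsB n P) (P \in Bs n).
Proof.
by rewrite in_fset_set; [apply: (iffP idP) => /[1!inE] | apply: finite_pairsB].
Qed.

Definition pair_products (n : nat) : {fset {fset cell} * {fset cell}} :=
  \bigcup_(l <- index_iota 1 n) (Bs l `*` Bs (n - l)).

Lemma card_pair_products n :
  #|` pair_products n| <= \sum_(1 <= l < n) #|` Bs l| * #|` Bs (n - l)|.
Proof. by under eq_bigr do rewrite -cardfsM; apply: card_bigfcup_le. Qed.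

Lemma mem_pair_products n l Q1 Q2 : 0 < l < n -> pairsB l Q1 ->
  pairsB (n - l) Q2 -> (Q1, Q2) \in pair_products n.
Proof.
move=> ln Q1B Q2B; apply/bigfcupP; exists l; first by rewrite mem_index_iota ln.
by rewrite in_fsetM; apply/andP; split; apply/BsP.
Qed.

Definition splitA (P : {fset cell}) : {fset cell} * {fset cell} :=
  (recentre rotcw cW @` side_a adj P cW origin, side_b adj P cW origin).

Lemma card_pairsA_le n :
  #|` As n| <= #|` Bs n| + \sum_(1 <= l < n) #|` Bs l| * #|` Bs (n - l)|.
Proof.
rewrite (card_fset_sep _ (fun P : {fset cell} => cW \notin P)) leq_add //.
  apply: (card_le_inj (h := id)) => [//|P].
  by rewrite !inE => /andP[/AsP[[/edge_connectedE Pc Pn] HA] WP]; apply/BsP/typeA_typeB.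
apply: leq_trans (card_pair_products n); apply: (card_le_inj (h := splitA)).
  move=> P P' _ _ [E1 E2]; apply: eq_of_sides E2.
  exact: sym_image_inj (sym_recentre cW sym_rotcw) _ _ E1.
move=> P; rewrite !inE => /andP[/AsP[[/edge_connectedE Pc Pn] HA] /negPn WP].
by have [lP Q1B Q2B] := typeA_split Pc Pn HA WP; apply: mem_pair_products lP Q1B Q2B.
Qed.

Definition splitB (P : {fset cell}) : {fset cell} * {fset cell} :=
  (recentre mirr cN @` side_a adj (P `\ origin) cN cE,
   recentre transp cE @` side_b adj (P `\ origin) cN cE).

Lemma card_pairsB_le n : 1 < n ->
  #|` Bs n| <= #|` As n.-1| + #|` Bs n.-1| +
               \sum_(1 <= l < n.-1) #|` Bs l| * #|` Bs (n.-1 - l)|.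
Proof.
move=> n_gt1; have origin_in P : P \in Bs n -> origin \in P.
  by move=> /BsP[_ /typeB_cells[]].
rewrite (card_fset_sep _ (fun P : {fset cell} => cE \notin P)) -addnA leq_add //.
  apply: (card_le_inj (h := fun P => recentre id cN @` (P `\ origin))).
    move=> P P' /[1!inE] /andP[/origin_in oP _] /[1!inE] /andP[/origin_in oP' _] E.
    by apply: eq_fsetD1 oP oP' (sym_image_inj (sym_recentre cN sym_id) E).
  move=> P; rewrite !inE => /andP[/BsP[[/edge_connectedE Pc Pn] HB] EP].
  by apply/AsP/typeB_noE.
rewrite (card_fset_sep _ (fun P : {fset cell} => cN \notin P)) leq_add //.
  apply: (card_le_inj (h := fun P => recentre transp cE @` (P `\ origin))).
    move=> P P' /[!inE] /andP[/andP[/origin_in oP _] _].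
    move=> /andP[/andP[/origin_in oP' _] _] E.
    by apply: eq_fsetD1 oP oP' (sym_image_inj (sym_recentre cE sym_transp) E).
  move=> P; rewrite !inE => /andP[/andP[/BsP[[/edge_connectedE Pc Pn] HB] EP] NP].
  rewrite negbK in EP.
  by apply/BsP/typeB_noN.
apply: leq_trans (card_pair_products n.-1); apply: (card_le_inj (h := splitB)).
  move=> P P' /[!inE] /andP[/andP[/origin_in oP _] _] /andP[/andP[/origin_in oP' _] _].
  move=> [E1 E2]; apply: eq_fsetD1 oP oP' (eq_of_sides _ _).
    exact: sym_image_inj (sym_recentre cN sym_mirr) _ _ E1.
  exact: sym_image_inj (sym_recentre cE sym_transp) _ _ E2.
move=> P; rewrite !inE negbK negbK.
move=> /andP[/andP[/BsP[[/edge_connectedE Pc Pn] HB] EP] NP].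
have [lP Q1B Q2B] := typeB_split Pc Pn HB EP NP.
exact: mem_pair_products lP Q1B Q2B.
Qed.

Lemma fE n : 0 < n -> f n = #|` As n|.
Proof. by rewrite /f; case: n. Qed.

Lemma gE n : 0 < n -> g n = #|` Bs n|.
Proof. by rewrite /g; case: n. Qed.

Lemma convolution_gE n :
  \sum_(1 <= l < n) g l * g (n - l) = \sum_(1 <= l < n) #|` Bs l| * #|` Bs (n - l)|.
Proof. by apply: eq_big_nat => l /andP[l0 ln]; rewrite !gE ?subn_gt0. Qed.

Lemma f_le n : 0 < n -> f n <= g n + \sum_(1 <= l < n) g l * g (n - l).
Proof. by move=> n0; rewrite fE ?gE ?convolution_gE //; apply: card_pairsA_le. Qed.

Lemma g_le n : 1 < n ->
  g n <= f n.-1 + g n.-1 + \sum_(1 <= l < n.-1) g l * g (n.-1 - l).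
Proof.
move=> n1; have n0 : 0 < n.-1 by rewrite -ltnS prednK // ltnW.
by rewrite gE ?fE ?gE ?convolution_gE ?(ltnW n1) //; apply: card_pairsB_le.
Qed.

Lemma g1_le : g 1 <= 1.
Proof.
rewrite gE // -[leqRHS](cardfs1 [fset origin]).
apply: (card_le_inj (h := id)) => // P.
move=> /BsP[[_ /eqP P1] /andP[/and4P[oP _ _ _] _]].
have [x Px] := cardfs1P P P1.
by move: oP; rewrite Px !inE => /eqP <-.
Qed.

Theorem mainTheorem2 (F G : nat -> nat) :
  F 0 = 1%N -> F 1 = 1%N -> G 0 = 1%N -> G 1 = 1%N ->
  (forall n, (2 <= n)%N ->
     F n = (G n + \sum_(1 <= l < n) G l * G (n - l))%N) ->
  (forall n, (2 <= n)%N ->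
     G n = (F n.-1 + G n.-1 + \sum_(1 <= l < n.-1) G l * G (n.-1 - l))%N) ->
  (forall n, (1 <= n)%N -> finite_set (pairsA n) /\ finite_set (pairsB n)) /\
  (forall n, (f n <= F n)%N /\ (g n <= G n)%N).
Proof.
move=> F0 F1 G0 G1 HF HG.
split=> [n _|]; first by split; [apply: finite_pairsA | apply: finite_pairsB].
elim/ltn_ind => n IH.
have conv_le m : m <= n ->
    \sum_(1 <= l < m) g l * g (m - l) <= \sum_(1 <= l < m) G l * G (m - l).
  move=> mn; apply: leq_convolution => l /andP[_ lm].
  exact: (IH l (leq_trans lm mn)).2.
case: n IH conv_le => [|[|n]] IH conv_le; first by rewrite /f /g F0 G0.
  rewrite F1 G1; split; last exact: g1_le.
  by rewrite (leq_trans (f_le _)) // big_geq // addn0 g1_le.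
have gn : g n.+2 <= G n.+2.
  rewrite HG // (leq_trans (g_le _)) // !leq_add ?conv_le //.
  - exact: (IH _ (ltnSn _)).1.
  - exact: (IH _ (ltnSn _)).2.
by split=> //; rewrite HF // (leq_trans (f_le _)) // leq_add ?conv_le.
Qed.
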